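(* Let $k\ge 2$ be an integer. For any positive integer $N$, \[ \widetilde{Z}_k(N)=\sum_{\substack{c\in\mathbb{N}\\ N\mid c}} z_k(c), \qquad\text{where}\qquad z_k(c):=\sum_{\substack{r\in\mathbb{N}\\ r\ge c}}\ \sum_{d\in\mathbb{N}}\mu(d)\,\mu_{k+1}(dr)\prod_{p\mid dr}\frac{1}{(p^k-1)^2}. \]
   Context: $\mu$ is the Möbius function, $\mu_{k+1}(q)$ is the indicator function of the $(k+1)$-free positive integers, and $p$ always denotes a prime. For $N\in\mathbb{N}$, \[ \widetilde{Z}_k(N):=\sum_{q\in\mathbb{N}}\mu_{k+1}(q)\Bigl(\prod_{p\mid q}\frac{1}{(p^k-1)^2}\Bigr)\#\{m\in\mathbb{N}\cap[1,q/N]:\gcd(m,q)=1\}. \] *)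

From HB Require Import structures.
From mathcomp Require Import all_boot all_order all_algebra.
From mathcomp Require Import all_classical all_reals.
From mathcomp Require Import topology normedtype sequences.
Set Implicit Arguments. Unset Strict Implicit. Unset Printing Implicit Defensive.
Import Order.TTheory GRing.Theory Num.Theory numFieldNormedType.Exports.
Local Open Scope ring_scope.

Definition squarefreeb (n : nat) : bool :=
  (0 < n)%N && all (fun p => logn p n == 1)%N (primes n).

(* Moebius function (mu(0) := 0, irrelevant since only positive arguments are used). *)
Definition moebius (R : nzRingType) (n : nat) : R :=
  if squarefreeb n then (-1) ^+ size (primes n) else 0.

(* mu_{k+1}: indicator of the (k+1)-free positive integers. *)
Definition kfree_ind (R : nzRingType) (k n : nat) : R :=
  if (0 < n)%N && all (fun p => logn p n <= k)%N (primes n) then 1 else 0.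

Definition wprod (R : fieldType) (k q : nat) : R :=
  \prod_(p <- primes q) ((((p ^ k - 1)%N)%:R) ^+ 2)^-1.

Definition ncop (N q : nat) : nat :=
  count (fun m => coprime m q) (iota 1 (q %/ N)).

Definition Ztilde (R : realType) (k N : nat) : R :=
  \big[+%R/0%R]_(0 <= q <oo) (kfree_ind R k q.+1 * wprod R k q.+1 * (ncop N q.+1)%:R).

Definition zk (R : realType) (k c : nat) : R :=
  \big[+%R/0%R]_(0 <= r <oo)
     (if (c <= r.+1)%N then
        \big[+%R/0%R]_(0 <= d <oo)
           (moebius R d.+1 * kfree_ind R k (d.+1 * r.+1) * wprod R k (d.+1 * r.+1))
      else 0).

From HB Require Import structures.
From mathcomp Require Import all_boot all_order all_algebra.
From mathcomp Require Import all_classical all_reals.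
From mathcomp Require Import topology normedtype sequences ereal esum exp.
From mathcomp Require Import zify ring.
Import Order.TTheory GRing.Theory Num.Theory numFieldNormedType.Exports.
Set Implicit Arguments. Unset Strict Implicit. Unset Printing Implicit Defensive.

(** Write a(n) = mu_{k+1}(n) prod_{p | n} (p^k - 1)^-2.  Moebius inversion of the
   coprimality condition gives #{m <= q/N : (m, q) = 1} = sum_{d | q} mu(d) floor(q/(d N)),
   so Ztilde_k(N) = sum_q a(q) sum_{d | q} mu(d) floor(q/(d N)).  Writing q = d r and
   floor(r/N) = #{c <= r : N | c}, this is sum_{N | c} sum_{r >= c} sum_d mu(d) a(d r)
   after a rearrangement of the triple sum.  The rearrangement is justified by
   absolute convergence: sum_{r, d} a(d r) r = sum_n a(n) sigma(n), and a sigma is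
   multiplicative, vanishes at p^e for e > k and has Euler factors 1 + O(k^2/p^2)
   because k >= 2, so its partial sums stay below exp(4k(k+1)).  To rearrange only
   nonnegative series, mu is replaced by a weight with values in [0, 1]: the
   identity holds for every such weight, hence for the difference of the positive
   and negative parts of mu. *)

Lemma coprime0n n : coprime 0 n = (n == 1).
Proof. by rewrite /coprime gcd0n. Qed.

Lemma dvdn_mem_divisors d m : d \in divisors m -> d %| m.
Proof.
have [->|m_gt0] := posnP m; first by rewrite dvdn0.
by rewrite -dvdn_divisors.
Qed.

Lemma perm_divisorsM m n : coprime m n ->
  perm_eq (divisors (m * n)) [seq a * b | a <- divisors m, b <- divisors n].
Proof.
have [->|m_gt0] := posnP m; first by rewrite coprime0n => /eqP->.
have [->|n_gt0] := posnP n; first by rewrite coprime_sym coprime0n => /eqP->.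
move=> co_mn; have mn_gt0 : 0 < m * n by rewrite muln_gt0 m_gt0.
apply: uniq_perm; first exact: divisors_uniq.
  apply: allpairs_uniq; [exact: divisors_uniq | exact: divisors_uniq |].
  move=> [a1 b1] [a2 b2] /allpairsP[[x1 y1] /= [+ + [-> ->]]].
  move=> /dvdn_mem_divisors x1m /dvdn_mem_divisors y1n.
  move=> /allpairsP[[x2 y2] /= [+ + [-> ->]]].
  move=> /dvdn_mem_divisors x2m /dvdn_mem_divisors y2n /= eq_xy.
  have co_m_y y : y %| n -> coprime m y by move/coprime_dvdr; apply.
  have co_n_x x : x %| m -> coprime n x.
    by rewrite coprime_sym in co_mn; move/coprime_dvdr; apply.
  congr (_, _).
    by rewrite -(gcdn_idPr x1m) -(gcdn_idPr x2m) -(Gauss_gcdl x1 (co_m_y _ y1n))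
      -(Gauss_gcdl x2 (co_m_y _ y2n)) eq_xy.
  by rewrite -(gcdn_idPr y1n) -(gcdn_idPr y2n) -(Gauss_gcdr y1 (co_n_x _ x1m))
    -(Gauss_gcdr y2 (co_n_x _ x2m)) eq_xy.
move=> d; rewrite -dvdn_divisors //; apply/idP/allpairsP => [d_mn|].
  exists (gcdn d m, gcdn d n); rewrite -!dvdn_divisors // !dvdn_gcdr.
  split=> //; apply/eqP; rewrite eqn_dvd; apply/andP; split.
    by rewrite muln_gcdl [m * _]muln_gcdr !dvdn_gcd dvdn_mulr //= dvdn_mull.
  rewrite Gauss_dvd ?dvdn_gcdl //.
  exact: coprime_dvdl (dvdn_gcdr d m) (coprime_dvdr (dvdn_gcdr d n) co_mn).
by move=> [[a b] /= [/dvdn_mem_divisors a_m /dvdn_mem_divisors b_n ->]]; rewrite dvdn_mul.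
Qed.

Lemma big_divisorsM (V : nmodType) m n (F : nat -> V) : coprime m n ->
  (\sum_(d <- divisors (m * n)) F d =
   \sum_(a <- divisors m) \sum_(b <- divisors n) F (a * b)%N)%R.
Proof. by move=> co_mn; rewrite (perm_big _ (perm_divisorsM co_mn)) big_allpairs_dep. Qed.

Lemma perm_divisors_pfactor p e : prime p ->
  perm_eq (divisors (p ^ e)) [seq p ^ i | i <- iota 0 e.+1].
Proof.
move=> p_pr; apply: uniq_perm; first exact: divisors_uniq.
  by rewrite map_inj_uniq ?iota_uniq //; apply: expnI; rewrite prime_gt1.
move=> d; rewrite -dvdn_divisors ?expn_gt0 ?prime_gt0 //.
apply/dvdn_pfactor/mapP => // -[i]; last first.
  by rewrite mem_iota => /andP[_ le_ie] ->; exists i.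
by move=> le_ie ->; exists i; rewrite // mem_iota.
Qed.

Lemma big_divisors_pfactor (V : nmodType) p e (F : nat -> V) : prime p ->
  (\sum_(d <- divisors (p ^ e)) F d = \sum_(0 <= i < e.+1) F (p ^ i)%N)%R.
Proof. by move=> p_pr; rewrite (perm_big _ (perm_divisors_pfactor e p_pr)) big_map. Qed.

Lemma perm_divisors_iota n : 0 < n ->
  perm_eq (divisors n) [seq j.+1 | j <- iota 0 n & j.+1 %| n].
Proof.
move=> n_gt0; apply: uniq_perm; first exact: divisors_uniq.
  by rewrite map_inj_uniq ?filter_uniq ?iota_uniq //; apply: succn_inj.
move=> d; rewrite -dvdn_divisors //; apply/idP/mapP => [d_n|[j]]; last first.
  by rewrite mem_filter => /andP[] ? _ ->.
have d_gt0 : 0 < d by apply: dvdn_gt0 d_n.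
exists d.-1; rewrite ?prednK // mem_filter prednK // d_n mem_iota /=.
by rewrite prednK // dvdn_leq.
Qed.

Lemma count_dvdn_iota d M : 0 < d -> count (dvdn d) (iota 1 M) = M %/ d.
Proof.
move=> d_gt0; elim: M => [|M IH]; first by rewrite div0n.
by rewrite -[M.+1]addn1 iotaD count_cat IH /= add1n addn0 addn1 (divnS _ d_gt0) addnC.
Qed.

Lemma sum_dvdn_const (V : pzSemiRingType) N M (x : V) : 0 < N ->
  (\sum_(0 <= c < M) (if (N %| c.+1)%N then x else 0) = x * (M %/ N)%N%:R)%R.
Proof.
move=> N_gt0; elim: M => [|M IH]; first by rewrite big_nil div0n mulr0n mulr0.
rewrite big_nat_recr //= IH (divnS _ N_gt0) natrD mulrDr addrC.
by case: (N %| M.+1)%N; rewrite ?mulr1n ?mulr0n ?mulr1 ?mulr0 ?addr0.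
Qed.

Lemma perm_divisors_gcd m q : 0 < q ->
  perm_eq (divisors (gcdn m q)) [seq d <- divisors q | d %| m].
Proof.
move=> q_gt0; have g_gt0 : 0 < gcdn m q by rewrite gcdn_gt0 q_gt0 orbT.
apply: uniq_perm; [exact: divisors_uniq | by rewrite filter_uniq ?divisors_uniq |].
by move=> d; rewrite mem_filter -!dvdn_divisors // dvdn_gcd andbC.
Qed.

Lemma perm_primesM m n : coprime m n ->
  perm_eq (primes (m * n)) (primes m ++ primes n).
Proof.
have [->|m_gt0] := posnP m; first by rewrite coprime0n => /eqP->.
have [->|n_gt0] := posnP n; first by rewrite coprime_sym coprime0n => /eqP->.
move=> co_mn; apply: uniq_perm => [||p]; first exact: primes_uniq.
  by rewrite cat_uniq !primes_uniq -coprime_has_primes // co_mn.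
by rewrite mem_cat primesM.
Qed.

Lemma logn_coprimeMr p m n : coprime m n -> p \in primes m ->
  logn p (m * n) = logn p m.
Proof.
have [->|n_gt0] := posnP n; first by rewrite coprime_sym coprime0n => /eqP->.
move=> co_mn; rewrite mem_primes => /and3P[_ m_gt0 p_m].
by rewrite lognM // (logn_coprime (coprime_dvdl p_m co_mn)) addn0.
Qed.

Lemma logn_coprimeMl p m n : coprime m n -> p \in primes n ->
  logn p (m * n) = logn p n.
Proof. by rewrite coprime_sym mulnC; apply: logn_coprimeMr. Qed.

Lemma all_primesM (P : nat -> nat -> bool) m n : coprime m n ->
  all (fun p => P p (logn p (m * n))) (primes (m * n)) =
  all (fun p => P p (logn p m)) (primes m) && all (fun p => P p (logn p n)) (primes n).
Proof.
move=> co_mn; rewrite (perm_all _ (perm_primesM co_mn)) all_cat.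
congr andb; apply: eq_in_all => p p_in.
  by rewrite (logn_coprimeMr co_mn p_in).
by rewrite (logn_coprimeMl co_mn p_in).
Qed.

(** * Multiplicative arithmetic functions *)

Section ArithMultiplicative.
Local Open Scope ring_scope.

Definition arith_multiplicative (R : pzSemiRingType) (f : nat -> R) : Prop :=
  f 1%N = 1 /\ forall m n, coprime m n -> f (m * n)%N = f m * f n.

Lemma arith_multiplicativeP (R : pzSemiRingType) (f : nat -> R) : f 1%N = 1 ->
    (forall m n, (0 < m)%N -> (0 < n)%N -> coprime m n -> f (m * n)%N = f m * f n) ->
  arith_multiplicative f.
Proof.
move=> f1 fM; split=> // m n.
have [->|m_gt0] := posnP m; first by rewrite coprime0n => /eqP->; rewrite muln1 f1 mulr1.
have [->|n_gt0] := posnP n; last exact: fM.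
by rewrite coprime_sym coprime0n => /eqP->; rewrite mul1n f1 mul1r.
Qed.

Lemma arith_multiplicativeM (R : comPzSemiRingType) (f g : nat -> R) :
  arith_multiplicative f -> arith_multiplicative g ->
  arith_multiplicative (fun n => f n * g n).
Proof.
move=> [f1 fM] [g1 gM]; split=> [|m n co_mn]; first by rewrite f1 g1 mulr1.
by rewrite fM // gM // mulrACA.
Qed.

Lemma arith_multiplicative_sum_divisors (R : comPzSemiRingType) (f : nat -> R) :
  arith_multiplicative f -> arith_multiplicative (fun n => \sum_(d <- divisors n) f d).
Proof.
move=> [f1 fM]; split=> [|m n co_mn]; first by rewrite big_seq1 f1.
rewrite big_divisorsM // big_distrlr /=.
apply: eq_big_seq => a /dvdn_mem_divisors a_m.
apply: eq_big_seq => b /dvdn_mem_divisors b_n.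
exact/fM/(coprime_dvdl a_m)/(coprime_dvdr b_n).
Qed.

Lemma arith_multiplicative_partC (R : pzSemiRingType) (f : nat -> R) (pi : nat_pred) n :
  arith_multiplicative f -> (0 < n)%N -> f n = f (n`_pi)%N * f (n`_pi^')%N.
Proof. by move=> [_ fM] n_gt0; rewrite -fM ?coprime_partC // partnC. Qed.

Lemma squarefreebM m n : coprime m n ->
  squarefreeb (m * n) = squarefreeb m && squarefreeb n.
Proof.
have [->|m_gt0] := posnP m; first by rewrite coprime0n => /eqP->.
have [->|n_gt0] := posnP n; first by rewrite muln0 andbF.
move=> co_mn; rewrite /squarefreeb muln_gt0 m_gt0 n_gt0 /=.
exact: (all_primesM (fun _ e => e == 1%N)).
Qed.

Lemma moebius_multiplicative (R : nzRingType) : arith_multiplicative (moebius R).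
Proof.
split=> [|m n co_mn]; first by rewrite /moebius /= expr0.
rewrite /moebius squarefreebM // (perm_size (perm_primesM co_mn)) size_cat exprD.
by case: squarefreeb; case: squarefreeb; rewrite ?mulr0 ?mul0r.
Qed.

Lemma kfree_ind_multiplicative (R : nzRingType) k :
  arith_multiplicative (kfree_ind R k).
Proof.
apply: arith_multiplicativeP => [|m n m_gt0 n_gt0 co_mn]; first by rewrite /kfree_ind.
rewrite /kfree_ind muln_gt0 m_gt0 n_gt0 /= (all_primesM (fun _ e => e <= k)%N) //.
by case: all; case: all; rewrite ?mulr1 ?mulr0.
Qed.

Lemma wprod_multiplicative (R : fieldType) k : arith_multiplicative (wprod R k).
Proof.
split=> [|m n co_mn]; first by rewrite /wprod big_nil.
by rewrite /wprod (perm_big _ (perm_primesM co_mn)) big_cat.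
Qed.

Lemma primes_pfactor p e : prime p -> (0 < e)%N -> primes (p ^ e) = [:: p].
Proof. by move=> p_pr e_gt0; rewrite primesX // primes_prime. Qed.

Lemma moebius_pfactor (R : nzRingType) p e : prime p -> (0 < e)%N ->
  moebius R (p ^ e) = if e == 1%N then -1 else 0.
Proof.
move=> p_pr e_gt0; rewrite /moebius /squarefreeb expn_gt0 prime_gt0 //.
by rewrite primes_pfactor //= pfactorK // andbT; case: eqP; rewrite ?expr1.
Qed.

Lemma kfree_ind_pfactor (R : nzRingType) k p e : prime p ->
  kfree_ind R k (p ^ e) = (e <= k)%N%:R.
Proof.
move=> p_pr; have [->|e_gt0] := posnP e; first by rewrite /kfree_ind.
rewrite /kfree_ind expn_gt0 prime_gt0 // primes_pfactor //= pfactorK // andbT.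
by case: leqP.
Qed.

Lemma wprod_pfactor (R : fieldType) k p e : prime p -> (0 < e)%N ->
  wprod R k (p ^ e) = ((p ^ k - 1)%N%:R ^+ 2)^-1.
Proof. by move=> p_pr e_gt0; rewrite /wprod primes_pfactor // big_seq1. Qed.

Lemma sum_moebius_pfactor (R : nzRingType) p e : prime p -> (0 < e)%N ->
  \sum_(d <- divisors (p ^ e)) moebius R d = 0.
Proof.
move=> p_pr; case: e => // e _; rewrite big_divisors_pfactor // !big_nat_recl //.
rewrite big1 => [|i _]; last by rewrite moebius_pfactor.
by rewrite expn0 moebius_pfactor // addr0 /moebius /= expr0 addrN.
Qed.

Lemma sum_moebius_divisors (R : comNzRingType) n : (0 < n)%N ->
  \sum_(d <- divisors n) moebius R d = (n == 1%N)%:R.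
Proof.
have sum_mul := arith_multiplicative_sum_divisors (moebius_multiplicative R).
case: n => [|[_|n _]] //; first by rewrite (proj1 sum_mul).
have p_pr : prime (pdiv n.+2) by rewrite pdiv_prime.
rewrite (arith_multiplicative_partC (pdiv n.+2) sum_mul) // p_part.
by rewrite sum_moebius_pfactor ?mul0r // logn_gt0 mem_primes p_pr pdiv_dvd.
Qed.

End ArithMultiplicative.

Lemma ncop_moebius (R : comNzRingType) N q : 0 < q ->
  ((ncop N q)%:R = \sum_(d <- divisors q) moebius R d * (q %/ d %/ N)%N%:R)%R.
Proof.
move=> q_gt0; rewrite /ncop -sum1_count natr_sum big_mkcond /=.
have coprime_sum m : ((if coprime m q then 1%:R else 0) =
    \sum_(d <- divisors q) if (d %| m)%N then moebius R d else 0 :> R)%R.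
  rewrite -big_mkcond -big_filter -(perm_big _ (perm_divisors_gcd m q_gt0)).
  by rewrite sum_moebius_divisors ?gcdn_gt0 ?q_gt0 ?orbT // /coprime; case: eqP.
under eq_bigr do rewrite coprime_sum.
rewrite exchange_big /=; apply: eq_big_seq => d /dvdn_mem_divisors d_q.
have d_gt0 : 0 < d by apply: dvdn_gt0 d_q.
rewrite -big_mkcond divnAC -(count_dvdn_iota _ d_gt0) -sum1_count natr_sum mulr_sumr.
by apply: eq_bigr => m _; rewrite mulr1.
Qed.

(** * An Euler product bound *)

Section EulerProductBound.
Local Open Scope ring_scope.
Variables (R : realDomainType) (h : nat -> R) (K : nat).
Hypotheses (h_mul : arith_multiplicative h) (h_ge0 : forall n, 0 <= h n)
  (h_pfactor_eq0 : forall p e, prime p -> (K <= e)%N -> h (p ^ e)%N = 0).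

(* By induction on P: sort s by the exponent e of the first prime p; stripping the
   p-part of its elements leaves a list whose primes lie in the rest of P. *)
Lemma sum_le_euler_product (P s : seq nat) : all prime P -> uniq s ->
    (forall n, n \in s -> (0 < n)%N /\ {subset primes n <= P}) ->
  \sum_(n <- s) h n <= \prod_(p <- P) \sum_(0 <= e < K) h (p ^ e)%N.
Proof.
elim: P s => [|p P IH] s /= primeP us s_sub.
  have s1 n : n \in s -> n = 1%N.
    move=> /s_sub[n_gt0 sub]; apply/eqP; rewrite eqn_leq n_gt0 andbT leqNgt.
    apply/negP => n_gt1; have := sub (pdiv n).
    by rewrite mem_primes pdiv_prime // n_gt0 pdiv_dvd => /(_ isT).
  case: s us s1 {s_sub} => [|x [|y s']] us s1; rewrite ?big_nil ?big_seq1 ?ler01 //.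
    by rewrite (s1 x) ?mem_head // (proj1 h_mul).
  by move: us; rewrite /= inE (s1 x) ?mem_head // (s1 y) ?inE ?eqxx ?orbT.
move: primeP => /andP[p_pr primeP].
have h_split n : (0 < n)%N -> h n = h (p ^ logn p n)%N * h (n`_p^')%N.
  by move=> n_gt0; rewrite -p_part; exact: arith_multiplicative_partC.
have by_exponent : \sum_(n <- s) h n =
    \sum_(0 <= e < K) \sum_(n <- s | e == logn p n) h n.
  rewrite (exchange_big_dep xpredT) //=; apply: eq_big_seq => n n_s.
  rewrite big_nat1_eq /=; case: ltnP => // le_K_logn.
  by rewrite h_split ?(proj1 (s_sub n n_s)) // h_pfactor_eq0 ?mul0r.
pose s_ e := [seq (n`_p^')%N | n <- s & e == logn p n].
have fibre e : \sum_(n <- s | e == logn p n) h n = h (p ^ e)%N * \sum_(m <- s_ e) h m.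
  rewrite big_map big_filter mulr_sumr big_seq_cond [RHS]big_seq_cond.
  apply: eq_bigr => n /andP[n_s /eqP->].
  exact: h_split (proj1 (s_sub n n_s)).
rewrite big_cons by_exponent mulr_suml; apply: ler_sum => e _.
rewrite fibre; apply: ler_wpM2l => //; apply: IH => //.
  rewrite map_inj_in_uniq ?filter_uniq // => n1 n2.
  rewrite !mem_filter => /andP[/eqP e1 n1_s] /andP[/eqP e2 n2_s] eq_part.
  rewrite -(partnC p (proj1 (s_sub n1 n1_s))) -(partnC p (proj1 (s_sub n2 n2_s))).
  by rewrite !p_part -e1 -e2 eq_part.
move=> m /mapP[n]; rewrite mem_filter => /andP[_ n_s] ->.
have [n_gt0 sub] := s_sub n n_s; split; first exact: part_gt0.
move=> q; rewrite primes_part mem_filter => /andP[q_p' /sub].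
by rewrite inE => /orP[/eqP q_p|//]; rewrite q_p !inE eqxx in q_p'.
Qed.

End EulerProductBound.

(** * Nonnegative series *)

Section NonnegativeSeries.
Variable R : realType.
Local Open Scope classical_set_scope.
Local Open Scope ereal_scope.

Definition nnsummable (u : nat -> R) : Prop :=
  (forall i, 0 <= u i)%R /\ \sum_(i <oo) (u i)%:E < +oo.

Lemma lim_series_EFin (u : nat -> R) : nnsummable u ->
  (limn (series u))%:E = \sum_(i <oo) (u i)%:E.
Proof.
move=> [u_ge0 u_fin]; rewrite -EFin_lim; last exact: nnseries_is_cvg u_ge0 u_fin.
by apply/congr_lim/funext => n /=; rewrite sumEFin.
Qed.

Lemma lim_series_ge0 (u : nat -> R) : nnsummable u -> (0 <= limn (series u))%R.
Proof.
move=> u_sum; rewrite -lee_fin lim_series_EFin //.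
by apply: nneseries_ge0 => i _ _; rewrite lee_fin (proj1 u_sum).
Qed.

Lemma lim_seriesB_nnsummable (u v : nat -> R) : nnsummable u -> nnsummable v ->
  limn (series (fun i => u i - v i)%R) = (limn (series u) - limn (series v))%R.
Proof.
move=> [u_ge0 u_fin] [v_ge0 v_fin].
exact: lim_seriesB (nnseries_is_cvg u_ge0 u_fin) (nnseries_is_cvg v_ge0 v_fin).
Qed.

Lemma term_le_nneseries (f : nat -> \bar R) r : (forall i, 0 <= f i) ->
  f r <= \sum_(i <oo) f i.
Proof.
move=> f_ge0; apply: le_trans (nneseries_lim_ge r.+1 _) => [|i _ _]; last exact: f_ge0.
by rewrite big_nat_recr //= leeDr // sume_ge0.
Qed.

Lemma nneseries_finite_support (f : nat -> \bar R) (P : pred nat) n :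
    (forall i, P i -> 0 <= f i) -> (forall i, (n <= i)%N -> P i -> f i = 0) ->
  \sum_(i <oo | P i) f i = \sum_(0 <= i < n | P i) f i.
Proof.
by move=> f_ge0 f_eq0; rewrite (nneseries_split_cond 0 n) // add0n eseries0 ?adde0.
Qed.

Lemma sum_divisors_nneseries (G : nat -> \bar R) n : (0 < n)%N ->
    (forall d, 0 <= G d) ->
  \sum_(d <- divisors n) G d = \sum_(j <oo | (j.+1 %| n)%N) G j.+1.
Proof.
move=> n_gt0 G_ge0; rewrite (perm_big _ (perm_divisors_iota n_gt0)) big_map big_filter.
rewrite (nneseries_finite_support (n := n)) ?/index_iota ?subn0 // => j le_nj.
by move=> /(dvdn_leq n_gt0); rewrite ltnNge le_nj.
Qed.

Lemma nneseries_sum_divisors (F : nat -> nat -> \bar R) : (forall r d, 0 <= F r d) ->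
  \sum_(r <oo) \sum_(d <oo) F r.+1 d.+1 =
  \sum_(q <oo) \sum_(d <- divisors q.+1) F (q.+1 %/ d)%N d.
Proof.
move=> F_ge0; transitivity
    (\sum_(q <oo) \sum_(j <oo | (j.+1 %| q.+1)%N) F (q.+1 %/ j.+1)%N j.+1); last first.
  by apply: eq_eseriesr => q _; rewrite sum_divisors_nneseries.
have series_ge0 (G : nat -> \bar R) (P : pred nat) : (forall j, 0 <= G j) ->
    0 <= \sum_(j <oo | P j) G j.
  by move=> G_ge0; apply: nneseries_ge0 => j _ _.
rewrite !nneseries_esumT => [|r|q]; try exact: series_ge0.
under eq_esum do rewrite nneseries_esumT //.
under [RHS]eq_esum do rewrite nneseries_esum //.
rewrite !esum_esum //.
pose J q := [set j : nat | (j.+1 %| q.+1)%N].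
pose e (x : nat * nat) := ((x.2.+1 * x.1.+1).-1, x.2).
have S_pos r d : (d.+1 * r.+1).-1.+1 = (d.+1 * r.+1)%N by rewrite prednK ?muln_gt0.
rewrite [RHS](reindex_esum ([set: nat] `*`` (fun=> [set: nat])) (setT `*`` J) e).
  by apply: eq_esum => -[r d] _ /=; rewrite S_pos mulKn.
split=> [[r d] _ | [r1 d1] [r2 d2] _ _ [] | [q j] [_ j_q]] /=.
- by split=> //; rewrite /J /= S_pos dvdn_mulr.
- move=> eq_q eq_d; rewrite -eq_d in eq_q *; move/(congr1 S): eq_q.
  by rewrite !S_pos => /eqP; rewrite eqn_mul2l /= => /eqP[->].
have q_gt0 : (0 < q.+1 %/ j.+1)%N by rewrite divn_gt0 // dvdn_leq.
exists ((q.+1 %/ j.+1).-1, j) => //; congr (_, _).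
change ((j.+1 * (q.+1 %/ j.+1).-1.+1).-1 = q).
by rewrite prednK // mulnC divnK.
Qed.

End NonnegativeSeries.

(** * Summability of a(n) sigma(n) *)

Section KweightDivisorSum.
Local Open Scope ring_scope.

Definition kweight (R : fieldType) k n : R := kfree_ind R k n * wprod R k n.

Definition divisor_sum (R : pzSemiRingType) n : R := \sum_(d <- divisors n) d%:R.

Lemma kweight_multiplicative (R : fieldType) k : arith_multiplicative (kweight R k).
Proof.
exact: arith_multiplicativeM (kfree_ind_multiplicative R k) (wprod_multiplicative R k).
Qed.

Lemma divisor_sum_multiplicative (R : comPzSemiRingType) :
  arith_multiplicative (divisor_sum R).
Proof. by apply: arith_multiplicative_sum_divisors; split=> // m n _; apply: natrM. Qed.

Lemma kweight_ge0 (R : numFieldType) k n : 0 <= kweight R k n.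
Proof.
rewrite /kweight /kfree_ind /wprod mulr_ge0 //; first by case: ifP.
by rewrite prodr_ge0 // => p _; rewrite invr_ge0 exprn_ge0.
Qed.

Lemma divisor_sum_ge0 (R : numDomainType) n : 0 <= divisor_sum R n.
Proof. by rewrite sumr_ge0. Qed.

Lemma sum_inv_sqr_le1 (R : numFieldType) M : \sum_(2 <= n < M) (n%:R ^+ 2)^-1 <= 1 :> R.
Proof.
have [M_le2|M_gt2] := leqP M 2; first by rewrite big_geq ?ler01.
apply: le_trans (_ : \sum_(2 <= n < M) ((n.-1%:R)^-1 - (n%:R)^-1) <= 1).
  rewrite big_nat [leRHS]big_nat; apply: ler_sum => -[//|[//|n]] _ /=.
  have ->: (n.+1%:R)^-1 - (n.+2%:R)^-1 = ((n.+1 * n.+2)%N%:R)^-1 :> R.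
    rewrite natrM -[n.+2%:R]natr1.
    have n1_neq0 : n.+1%:R != 0 :> R by rewrite pnatr_eq0.
    have n2_neq0 : n.+1%:R + 1 != 0 :> R by rewrite natr1 pnatr_eq0.
    by move: (n.+1%:R) n1_neq0 n2_neq0 => x ? ?; field; apply/andP.
  rewrite -natrX lef_pV2 ?posrE ?ltr0n ?muln_gt0 ?expn_gt0 // ler_nat.
  by rewrite expnS expn1 leq_mul2r leqnSn orbT.
rewrite (telescope_sumr_eq (fun n => - (n.-1%:R)^-1)) ?(ltnW M_gt2) // => [|n _].
  by rewrite /= invr1 opprK addrC lerBlDr lerDl invr_ge0.
by rewrite /= opprK addrC.
Qed.

Variables (R : realType) (k : nat).
Hypothesis k_ge2 : (2 <= k)%N.

Local Notation h n := (kweight R k n * divisor_sum R n).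

Lemma inv_sqr_pfactor_le p : prime p ->
  ((p ^ k - 1)%N%:R ^+ 2)^-1 * (p ^ k)%N%:R <= 4 / p%:R ^+ 2 :> R.
Proof.
move=> p_pr; have p_gt1 := prime_gt1 p_pr.
have pk_ge_p2 : (p ^ 2 <= p ^ k)%N by rewrite leq_pexp2l // ltnW.
have pk_ge4 : (4 <= p ^ k)%N by apply: leq_trans pk_ge_p2; rewrite (@leq_exp2r 2 p 2).
have key : (p ^ k * p ^ 2 <= 4 * ((p ^ k - 1) * (p ^ k - 1)))%N by nia.
rewrite mulrC ler_pdivrMr ?exprn_gt0 ?ltr0n ?subn_gt0 ?(leq_trans _ pk_ge4) //.
rewrite mulrAC ler_pdivlMr ?exprn_gt0 ?ltr0n ?prime_gt0 //.
by rewrite -!natrX -[4]/(4%N%:R) -!natrM ler_nat (expnS _ 1) expn1.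
Qed.

Lemma divisor_sum_pfactor_le p e : prime p -> (e <= k)%N ->
  divisor_sum R (p ^ e) <= (k.+1 * p ^ k)%N%:R.
Proof.
move=> p_pr le_ek; rewrite /divisor_sum big_divisors_pfactor // -natr_sum ler_nat.
apply: leq_trans (_ : \sum_(0 <= i < e.+1) p ^ k <= _)%N.
  rewrite !big_nat leq_sum // => i /andP[_ lt_ie].
  by rewrite leq_pexp2l ?prime_gt0 ?(leq_trans _ le_ek).
by rewrite sum_nat_const_nat subn0 leq_mul2r ltnS le_ek orbT.
Qed.

Lemma euler_factor_le p : prime p ->
  \sum_(0 <= e < k.+1) h (p ^ e)%N <= 1 + (4 * k * k.+1)%N%:R / p%:R ^+ 2.
Proof.
move=> p_pr; rewrite big_nat_recl // (proj1 (kweight_multiplicative R k)).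
rewrite (proj1 (divisor_sum_multiplicative R)) mulr1 lerD2l.
apply: le_trans (_ : \sum_(0 <= e < k) (k.+1%:R * (4 / p%:R ^+ 2)) <= _); last first.
  rewrite sumr_const_nat subn0 -mulr_natl !natrM le_eqVlt; apply/predU1P; left; ring.
apply: ler_sum_nat => e /andP[_ lt_ek].
rewrite /kweight kfree_ind_pfactor // lt_ek mul1r wprod_pfactor //.
apply: le_trans (ler_wpM2l _ (divisor_sum_pfactor_le p_pr lt_ek)) _.
  by rewrite invr_ge0 exprn_ge0.
by rewrite natrM mulrCA ler_wpM2l // inv_sqr_pfactor_le.
Qed.

Lemma kweight_divisor_sum_multiplicative : arith_multiplicative (fun n => h n).
Proof.
exact: arith_multiplicativeM (kweight_multiplicative R k) (divisor_sum_multiplicative R).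
Qed.

Lemma partial_sum_kweight_divisor_sum_le M :
  \sum_(0 <= q < M) h q.+1 <= expR (4 * k * k.+1)%N%:R.
Proof.
set C : R := (4 * k * k.+1)%N%:R.
have h_ge0 n : 0 <= h n by rewrite mulr_ge0 ?kweight_ge0 ?divisor_sum_ge0.
apply: le_trans (_ : \prod_(p <- [seq p <- iota 2 M | prime p])
    \sum_(0 <= e < k.+1) h (p ^ e)%N <= _).
  rewrite (_ : \sum_(0 <= q < M) h q.+1 = \sum_(n <- map S (iota 0 M)) h n); last first.
    by rewrite big_map /index_iota subn0.
  apply: sum_le_euler_product => //.
  - exact: kweight_divisor_sum_multiplicative.
  - by move=> p e p_pr lt_ke; rewrite /kweight kfree_ind_pfactor // leqNgt lt_ke !mul0r.
  - exact: filter_all.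
  - by rewrite map_inj_uniq ?iota_uniq //; apply: succn_inj.
  move=> n /mapP[q]; rewrite mem_iota add0n => /andP[_ lt_qM] ->.
  split=> // r; rewrite mem_primes => /and3P[r_pr _ r_dvd].
  rewrite mem_filter r_pr mem_iota prime_gt1 //=.
  by have := dvdn_leq (ltn0Sn q) r_dvd; lia.
rewrite big_filter; apply: le_trans (_ : \prod_(p <- iota 2 M | prime p)
    expR (C / p%:R ^+ 2) <= _).
  apply: ler_prod => p p_pr; rewrite sumr_ge0 => [|e _] //=.
  exact: le_trans (euler_factor_le p_pr) (expR_ge1Dx _).
rewrite -expR_sum ler_expR -mulr_sumr.
apply: le_trans (_ : C * \sum_(2 <= n < M.+2) (n%:R ^+ 2)^-1 <= _).
  rewrite ler_wpM2l // /index_iota subSS subSS subn0 big_mkcond.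
  by apply: ler_sum => n _; case: ifP => // _; rewrite invr_ge0 exprn_ge0.
by rewrite ler_piMr // sum_inv_sqr_le1.
Qed.

Lemma kweight_divisor_sum_summable : (\sum_(q <oo) (h q.+1)%:E < +oo)%E.
Proof.
apply: le_lt_trans (ltry (expR (4 * k * k.+1)%N%:R)).
apply: lime_le.
  apply: is_cvg_nneseries => n _ _.
  by rewrite lee_fin mulr_ge0 ?kweight_ge0 ?divisor_sum_ge0.
by apply: nearW => n; rewrite sumEFin lee_fin partial_sum_kweight_divisor_sum_le.
Qed.

Lemma kweight_mul_summable :
  (\sum_(r <oo) \sum_(d <oo) (kweight R k (d.+1 * r.+1) * r.+1%:R)%:E < +oo)%E.
Proof.
rewrite nneseries_interchange => [|r d]; last by rewrite lee_fin mulr_ge0 ?kweight_ge0.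
rewrite (nneseries_sum_divisors (F := fun d r => (kweight R k (d * r) * r%:R)%:E));
  last first.
  by move=> d r; rewrite lee_fin mulr_ge0 ?kweight_ge0.
apply: le_lt_trans kweight_divisor_sum_summable.
apply: lee_nneseries => [q _ _|q _].
  by rewrite sume_ge0 // => d _; rewrite lee_fin mulr_ge0 ?kweight_ge0.
rewrite sumEFin lee_fin /divisor_sum mulr_sumr le_eqVlt; apply/predU1P; left.
by apply: eq_big_seq => d /dvdn_mem_divisors d_q; rewrite divnK.
Qed.

End KweightDivisorSum.

(** * The identity for weights with values in [0, 1] *)

(* Bracketed as in [zk], so that [zk R k c] is [zk_weighted k (moebius R) c]
   by conversion. *)
Definition zk_summand (R : fieldType) k (s : nat -> R) r d : R :=
  (s d.+1 * kfree_ind R k (d.+1 * r.+1) * wprod R k (d.+1 * r.+1))%R.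

Definition zk_term (R : realType) k (s : nat -> R) c r : R :=
  if (c <= r.+1)%N then limn (series (zk_summand k s r)) else 0%R.

Definition zk_weighted (R : realType) k (s : nat -> R) c : R :=
  limn (series (zk_term k s c)).

Definition Ztilde_weighted (R : realType) k N (s : nat -> R) : R :=
  limn (series (fun q =>
    kweight R k q.+1 * \sum_(d <- divisors q.+1) s d * (q.+1 %/ d %/ N)%N%:R)%R).

Section WeightedIdentity.
Variables (R : realType) (k N : nat) (s : nat -> R).
Local Open Scope ring_scope.
Hypotheses (k_ge2 : (2 <= k)%N) (N_gt0 : (0 < N)%N) (s01 : forall d, 0 <= s d <= 1).

Local Notation a := (kweight R k).
Local Notation t := (zk_summand k s).
Local Notation zk_term := (zk_term k s).

Lemma zk_summand_ge0_le r d : 0 <= t r d <= a (d.+1 * r.+1).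
Proof.
have /andP[s_ge0 s_le1] := s01 d.+1; have a_ge0 := kweight_ge0 R k (d.+1 * r.+1).
by rewrite /zk_summand -mulrA mulr_ge0 //= ler_piMl.
Qed.

Lemma zk_summand_if_ge0_le (b : bool) r d :
  0 <= (if b then t r d else 0) <= a (d.+1 * r.+1) * r.+1%:R.
Proof.
have a_ge0 := kweight_ge0 R k (d.+1 * r.+1); case: b; last by rewrite lexx mulr_ge0.
have /andP[t_ge0 t_le] := zk_summand_ge0_le r d.
by rewrite t_ge0 (le_trans t_le) // ler_peMr // ler1n.
Qed.

Lemma zk_summand_divn_ge0_le r d :
  0 <= t r d * (r.+1 %/ N)%N%:R <= a (d.+1 * r.+1) * r.+1%:R.
Proof.
have /andP[t_ge0 t_le] := zk_summand_ge0_le r d.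
by rewrite mulr_ge0 //= ler_pM // ler_nat leq_div.
Qed.

Lemma zk_summand_nnsummable r : nnsummable (t r).
Proof.
split=> [d|]; first by case/andP: (zk_summand_ge0_le r d).
apply: le_lt_trans (kweight_mul_summable R k_ge2).
apply: le_trans (term_le_nneseries r _) => [|r']; last first.
  by apply: nneseries_ge0 => d _ _; rewrite lee_fin mulr_ge0 ?kweight_ge0.
apply: lee_nneseries => [d _ _|d _]; rewrite lee_fin.
  by case/andP: (zk_summand_ge0_le r d).
by case/andP: (zk_summand_if_ge0_le true r d).
Qed.

Lemma zk_term_EFin c r :
  (zk_term c r)%:E = (\sum_(d <oo) (if (c <= r.+1)%N then t r d else 0)%:E)%E.
Proof.
rewrite /zk_term; case: ifP => _; last by rewrite eseries0.
exact: lim_series_EFin (zk_summand_nnsummable r).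
Qed.

Lemma zk_term_nnsummable c : nnsummable (zk_term c).
Proof.
have if_summand_ge0 r d : (0 <= (if (c <= r.+1)%N then t r d else 0)%:E)%E.
  by rewrite lee_fin; case/andP: (zk_summand_if_ge0_le (c <= r.+1)%N r d).
split=> [r|].
  by rewrite -lee_fin zk_term_EFin; apply: nneseries_ge0 => d _ _; apply: if_summand_ge0.
apply: le_lt_trans (kweight_mul_summable R k_ge2); apply: lee_nneseries => [r _ _|r _].
  by rewrite zk_term_EFin; apply: nneseries_ge0 => d _ _; apply: if_summand_ge0.
rewrite zk_term_EFin; apply: lee_nneseries => [d _ _|d _]; first exact: if_summand_ge0.
by rewrite lee_fin; case/andP: (zk_summand_if_ge0_le (c <= r.+1)%N r d).
Qed.

Lemma zk_weighted_EFin c : (zk_weighted k s c)%:E =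
  (\sum_(r <oo) \sum_(d <oo) (if (c <= r.+1)%N then t r d else 0)%:E)%E.
Proof.
rewrite lim_series_EFin; last exact: zk_term_nnsummable.
by apply: eq_eseriesr => r _; apply: zk_term_EFin.
Qed.

Lemma zk_weighted_ge0 c : 0 <= zk_weighted k s c.
Proof. exact: lim_series_ge0 (zk_term_nnsummable c). Qed.

Lemma sum_zk_weighted_nneseries :
  (\sum_(c <oo) (if (N %| c.+1)%N then zk_weighted k s c.+1 else 0)%:E =
   \sum_(r <oo) \sum_(d <oo) (t r d * (r.+1 %/ N)%N%:R)%:E)%E.
Proof.
have if_summand_ge0 (b : bool) r d : (0 <= (if b then t r d else 0)%:E)%E.
  by rewrite lee_fin; case/andP: (zk_summand_if_ge0_le b r d).
transitivity (\sum_(c <oo) \sum_(r <oo) \sum_(d <oo)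
    (if (N %| c.+1)%N && (c.+1 <= r.+1)%N then t r d else 0)%:E)%E.
  apply: eq_eseriesr => c _; case: ifP => _; first exact: zk_weighted_EFin.
  by rewrite eseries0 // => r _ _; rewrite eseries0.
rewrite nneseries_interchange; last by move=> c r; apply: nneseries_ge0 => d _ _.
apply: eq_eseriesr => r _; rewrite nneseries_interchange //.
apply: eq_eseriesr => d _; rewrite (nneseries_finite_support (n := r.+1)) //; last first.
  by move=> c lt_rc _; rewrite ltnS leqNgt lt_rc andbF.
rewrite sumEFin -sum_dvdn_const //; congr EFin.
by apply: eq_big_nat => c /andP[_ lt_cr]; rewrite lt_cr andbT.
Qed.

Lemma zk_summand_divn_summable :
  (\sum_(r <oo) \sum_(d <oo) (t r d * (r.+1 %/ N)%N%:R)%:E < +oo)%E.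
Proof.
apply: le_lt_trans (kweight_mul_summable R k_ge2).
apply: lee_nneseries => [r _ _|r _].
  apply: nneseries_ge0 => d _ _.
  by rewrite lee_fin; case/andP: (zk_summand_divn_ge0_le r d).
by apply: lee_nneseries => [d _ _|d _]; rewrite lee_fin;
  case/andP: (zk_summand_divn_ge0_le r d).
Qed.

Lemma zk_weighted_series_nnsummable :
  nnsummable (fun c => if (N %| c.+1)%N then zk_weighted k s c.+1 else 0).
Proof.
split=> [c|]; first by case: ifP => // _; apply: zk_weighted_ge0.
by rewrite sum_zk_weighted_nneseries; apply: zk_summand_divn_summable.
Qed.

Lemma nneseries_Ztilde_weighted :
  (\sum_(r <oo) \sum_(d <oo) (t r d * (r.+1 %/ N)%N%:R)%:E =
   \sum_(q <oo) (a q.+1 * \sum_(d <- divisors q.+1) s d * (q.+1 %/ d %/ N)%N%:R)%:E)%E.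
Proof.
rewrite (nneseries_sum_divisors (F := fun r d => (t r.-1 d.-1 * (r %/ N)%N%:R)%:E));
  last first.
  by move=> r d; rewrite lee_fin mulr_ge0 //; case/andP: (zk_summand_ge0_le r.-1 d.-1).
apply: eq_eseriesr => q _; rewrite sumEFin mulr_sumr; congr EFin.
apply: eq_big_seq => d /dvdn_mem_divisors d_q; have d_gt0 := dvdn_gt0 (ltn0Sn q) d_q.
have q_d_gt0 : (0 < q.+1 %/ d)%N by rewrite divn_gt0 // dvdn_leq.
by rewrite /zk_summand !prednK // mulnC divnK // /kweight; ring.
Qed.

Lemma Ztilde_terms_nnsummable :
  nnsummable (fun q => a q.+1 * \sum_(d <- divisors q.+1) s d * (q.+1 %/ d %/ N)%N%:R).
Proof.
split=> [q|]; last by rewrite -nneseries_Ztilde_weighted; apply: zk_summand_divn_summable.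
rewrite mulr_ge0 ?kweight_ge0 // sumr_ge0 // => d _.
by rewrite mulr_ge0 //; case/andP: (s01 d).
Qed.

Lemma Ztilde_weighted_eq : Ztilde_weighted k N s =
  limn (series (fun c => if (N %| c.+1)%N then zk_weighted k s c.+1 else 0)).
Proof.
apply: EFin_inj; rewrite /Ztilde_weighted !lim_series_EFin; last first.
- exact: Ztilde_terms_nnsummable.
- exact: zk_weighted_series_nnsummable.
by rewrite sum_zk_weighted_nneseries nneseries_Ztilde_weighted.
Qed.

End WeightedIdentity.

Local Open Scope ring_scope.

Definition moebius_part (R : nzRingType) (b : bool) d : R :=
  (squarefreeb d && (odd (size (primes d)) == b))%:R.

Lemma moebius_partE (R : nzRingType) d :
  moebius R d = moebius_part R false d - moebius_part R true d.
Proof.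
rewrite /moebius /moebius_part; case: squarefreeb; last by rewrite subr0.
by rewrite -signr_odd; case: odd; rewrite ?expr1 ?expr0 ?subr0 ?sub0r.
Qed.

Lemma moebius_part_ge0_le1 (R : numDomainType) b d :
  0 <= moebius_part R b d <= 1.
Proof. by rewrite /moebius_part ler0n lern1 leq_b1. Qed.

Section WeightLinearity.
Variables (R : realType) (k N : nat) (s1 s2 : nat -> R).
Hypotheses (k_ge2 : (2 <= k)%N) (N_gt0 : (0 < N)%N).
Hypotheses (s1_01 : forall d, 0 <= s1 d <= 1) (s2_01 : forall d, 0 <= s2 d <= 1).

Local Notation s := (fun d => s1 d - s2 d).

Lemma zk_weightedB c : zk_weighted k s c = zk_weighted k s1 c - zk_weighted k s2 c.
Proof.
rewrite /zk_weighted -lim_seriesB_nnsummable; last 2 first.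
- exact: zk_term_nnsummable k_ge2 s1_01 c.
- exact: zk_term_nnsummable k_ge2 s2_01 c.
congr (limn (series _)); apply/funext => r; rewrite /zk_term.
case: ifP => _; last by rewrite subr0.
rewrite -lim_seriesB_nnsummable; last 2 first.
- exact: zk_summand_nnsummable k_ge2 s1_01 r.
- exact: zk_summand_nnsummable k_ge2 s2_01 r.
by congr (limn (series _)); apply/funext => d; rewrite /zk_summand !mulrBl.
Qed.

Lemma Ztilde_weightedB :
  Ztilde_weighted k N s = Ztilde_weighted k N s1 - Ztilde_weighted k N s2.
Proof.
rewrite /Ztilde_weighted -lim_seriesB_nnsummable; last 2 first.
- exact: Ztilde_terms_nnsummable k_ge2 s1_01.
- exact: Ztilde_terms_nnsummable k_ge2 s2_01.
congr (limn (series _)); apply/funext => q; rewrite -mulrBr -sumrB.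
by congr (_ * _); apply: eq_bigr => d _; rewrite mulrBl.
Qed.

Lemma Ztilde_weighted_eqB : Ztilde_weighted k N s =
  limn (series (fun c => if (N %| c.+1)%N then zk_weighted k s c.+1 else 0)).
Proof.
rewrite Ztilde_weightedB !Ztilde_weighted_eq // -lim_seriesB_nnsummable; last 2 first.
- exact: zk_weighted_series_nnsummable k_ge2 N_gt0 s1_01.
- exact: zk_weighted_series_nnsummable k_ge2 N_gt0 s2_01.
congr (limn (series _)); apply/funext => c.
by case: ifP => _; rewrite ?subr0 ?zk_weightedB.
Qed.

End WeightLinearity.

Theorem lemma2p2 (R : realType) (k N : nat) (hk : (2 <= k)%N) (hN : (0 < N)%N) :
  Ztilde R k N =
  \big[+%R/0%R]_(0 <= c <oo) (if (N %| c.+1)%N then zk R k c.+1 else 0).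
Proof.
have -> : Ztilde R k N = Ztilde_weighted k N (moebius R).
  rewrite /Ztilde /Ztilde_weighted; congr (limn _); apply/funext => n.
  by apply: eq_bigr => q _; rewrite ncop_moebius.
change (Ztilde_weighted k N (moebius R) = limn (series (fun c =>
  if (N %| c.+1)%N then zk_weighted k (moebius R) c.+1 else 0))).
rewrite (_ : moebius R = fun d => moebius_part R false d - moebius_part R true d).
  by apply: Ztilde_weighted_eqB => // d; apply: moebius_part_ge0_le1.
by apply/funext => d; apply: moebius_partE.
Qed.
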